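(* Let $f:E_A^{\mathbb N}\to\mathbb R$ be summable, strongly regular and Hölder-type with $P(f)=0$. There is a constant $K_1>0$, depending only on $h$, such that for every $n\ge1$, every $\omega\in E_A^n$ and every $\rho\in E_A^{\mathbb N}$ with $\omega\rho$ admissible, $$(1-K_1e^{-n\alpha})h(\omega\rho)m([\omega])\le\mu([\omega])\le(1+K_1e^{-n\alpha})h(\omega\rho)m([\omega]).$$
   Context: $E$ countable, $A:E\times E\to\{0,1\}$, $E_A^{\mathbb N}$ admissible one-sided sequences, $E_A^n$ admissible words of length $n$; the subshift is finitely irreducible. $S_nf=\sum_{j<n}f\circ\sigma^j$, $[\omega]$ cylinders, $|\rho\wedge\rho'|$ common-prefix length. Fix $\alpha>0$; Hölder-type: $V_\alpha(f)=\sup_{n\ge1}\sup\{|f(\rho)-f(\rho')|e^{\alpha(n-1)}:|\rho\wedge\rho'|\ge n\}<\infty$. Summable: $\sum_e\exp(\sup_{[e]}f)<\infty$. $P(g)=\lim_n\frac1n\log\sum_{\omega\in E_A^n}\exp(\sup_{[\omega]}S_ng)$; strongly regular: $P(xf)=0$ for some $x>0$ and $0<P(xf)<\infty$ for some $x>0$. $\mathcal L_1g(\rho)=\sum_{e:A_{e\rho_1}=1}e^{f(e\rho)}g(e\rho)$; $m$ the Borel probability with $\mathcal L_1^*m=m$; $h$ the positive Hölder continuous function with $\mathcal L_1h=h$, $\int h\,dm=1$; $\mu$ the measure $\mu(B)=\int_Bh\,dm$. *)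

From HB Require Import structures.
From mathcomp Require Import all_boot all_order all_algebra.
From mathcomp Require Import all_classical all_reals all_analysis.
Set Implicit Arguments. Unset Strict Implicit. Unset Printing Implicit Defensive.
Import Order.TTheory GRing.Theory Num.Theory.
Local Open Scope classical_set_scope.
Local Open Scope ring_scope.

Section Symbolic.
Variables (E : countType) (A : rel E).

Record EAN := MkEAN { seq_of :> nat -> E ;
                      adm_of : forall i, A (seq_of i) (seq_of i.+1) }.

HB.instance Definition _ := gen_eqMixin EAN.
HB.instance Definition _ := gen_choiceMixin EAN.

(* E_A^N with a distinguished point (only used to get a pointed type,
   as required by MathComp-Analysis for measurable spaces) *)
Definition EANp (r0 : EAN) : Type := EAN.
HB.instance Definition _ (r0 : EAN) := Choice.on (EANp r0).
HB.instance Definition _ (r0 : EAN) := isPointed.Build (EANp r0) r0.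

Definition shiftEAN (r : EAN) : EAN :=
  @MkEAN (fun i => r i.+1) (fun i => adm_of r i.+1).

(* concatenation e rho, when A_{e rho_1} = 1 (otherwise junk value rho) *)
Definition consE (e : E) (r : EAN) : EAN :=
  match A e (r 0%N) as b return A e (r 0%N) = b -> EAN with
  | true => fun H =>
      @MkEAN (fun i => if i is k.+1 then r k else e)
        (fun i => match i as i0 return
                    A (if i0 is k.+1 then r k else e)
                      (if i0.+1 is k.+1 then r k else e) with
                  | 0%N => H
                  | k.+1 => adm_of r k
                  end)
  | false => fun _ => r
  end erefl.

Definition words (n : nat) : set (seq E) :=
  [set w | size w = n /\ sorted A w].

Definition pref (r : EAN) (n : nat) : seq E := mkseq r n.

Definition cyl (w : seq E) : set EAN := [set r | pref r (size w) = w].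

Definition cylinders (r0 : EAN) : set (set (EANp r0)) := range cyl.

Definition finitely_irreducible : Prop :=
  exists L : seq (seq E), forall a b : E,
    exists2 l, l \in L & sorted A (a :: l ++ [:: b]).

Variable R : realType.

Definition Sn (g : EAN -> R) (n : nat) (r : EAN) : R :=
  \sum_(j < n) g (iter j shiftEAN r).

Definition supcyl (g : EAN -> R) (w : seq E) : R := sup [set g r | r in cyl w].

(* V_alpha(g) < oo ; |rho /\ rho'| >= n  <->  same first n letters *)
Definition holder_type (alpha : R) (g : EAN -> R) : Prop :=
  exists C : R, forall (n : nat) (r r' : EAN), (0 < n)%N ->
    pref r n = pref r' n ->
    `|g r - g r'| * expR (alpha * (n - 1)%:R) <= C.

Definition pot_summable (g : EAN -> R) : Prop :=
  (\esum_(e in [set: E]) (expR (supcyl g [:: e]))%:E < +oo)%E.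

Definition partition_fun (g : EAN -> R) (n : nat) : \bar R :=
  \esum_(w in words n) (expR (supcyl (Sn g n) w))%:E.

Definition pressure_seq (g : EAN -> R) (n : nat) : \bar R :=
  match partition_fun g n with
  | r%:E => (ln r / n%:R)%:E
  | +oo%E => +oo%E
  | -oo%E => -oo%E
  end.

Definition top_pressure (g : EAN -> R) : \bar R := limn (pressure_seq g).

Definition strongly_regular (g : EAN -> R) : Prop :=
  (exists x : R, 0 < x /\ top_pressure (fun r => (x * g r)%R) = 0%E) /\
  (exists x : R, 0 < x /\ (0 < top_pressure (fun r => (x * g r)%R) < +oo)%E).

Definition L1 (f : EAN -> R) (g : EAN -> \bar R) (r : EAN) : \bar R :=
  \esum_(e in [set e | A e (r 0%N)]) ((expR (f (consE e r)))%:E * g (consE e r))%E.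

End Symbolic.

(* E_A^N with its Borel sigma-algebra (generated by the cylinders) *)
Notation EANm E A r0 := (g_sigma_algebraType (@cylinders E A r0)).

From HB Require Import structures.
From mathcomp Require Import all_boot all_order all_algebra.
From mathcomp Require Import all_classical all_reals all_analysis.
From mathcomp Require Import lra ring.
Import Order.TTheory GRing.Theory Num.Theory.
Local Open Scope classical_set_scope.
Local Open Scope ring_scope.

(* Since mu([w]) is the integral of h over [w] against m, it suffices that
   h(x) = (1 + O(e^{-n alpha})) h(t) for all x, t in a cylinder of length n.
   The Hölder property bounds |h x - h t| by C e^{-(n-1) alpha}, so the point
   is that h is bounded away from 0.  Keeping one term of L_1 h = h and
   iterating gives h(r) >= c_u h(u r) for every admissible word u, with c_u > 0
   because f has bounded oscillation on 1-cylinders.  Finite irreducibility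
   connects a long prefix of a chosen point r0 to any r by one of finitely many
   words u, and h(u r) >= h(r0)/2 since u r is close to r0. *)

Set Implicit Arguments. Unset Strict Implicit.

Section Words.
Variables (E : countType) (A : rel E).
Implicit Types (e : E) (u : seq E) (r : EAN A).

Lemma consE_at e r : A e (r 0%N) ->
  forall i, consE e r i = if i is k.+1 then r k else e.
Proof.
move=> Aer i; rewrite /consE; move: (@erefl _ (A e (r 0%N))).
by case: {2 3}(A e (r 0%N)) => // Aer'; rewrite Aer in Aer'.
Qed.

Fixpoint catE u r : EAN A :=
  if u is e :: u' then consE e (catE u' r) else r.

Lemma catE_at u r : sorted A (u ++ [:: r 0%N]) ->
  forall i, catE u r i = nth (r (i - size u)%N) u i.
Proof.
elim: u => [|e u IH] /= su i; first by rewrite nth_nil subn0.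
have su' := path_sorted su.
have Ae : A e (catE u r 0%N).
  by rewrite IH // sub0n; case: u su {IH su'} => [|x u] /= /andP[].
by rewrite consE_at //; case: i => [|i] //=; rewrite IH // subSS.
Qed.

Lemma pref_catE u r k : sorted A (u ++ [:: r 0%N]) -> (k <= size u)%N ->
  pref (catE u r) k = take k u.
Proof.
move=> su ku; apply: (@eq_from_nth _ (r 0%N)).
  by rewrite size_mkseq size_take_min (minn_idPl ku).
move=> i; rewrite size_mkseq => ik.
rewrite nth_mkseq // nth_take // catE_at //; apply: set_nth_default.
exact: leq_trans ik ku.
Qed.

Lemma sorted_pref_cat r N s : sorted A (r N :: s) -> sorted A (pref r N ++ r N :: s).
Proof.
elim: N s => [|N IH] s rs //.
by rewrite /pref mkseqS cat_rcons; apply: IH => /=; rewrite adm_of.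
Qed.

End Words.

Section Transfer.
Variables (E : countType) (A : rel E) (R : realType) (f h : EAN A -> R).
Hypothesis h_eigen : forall r, L1 f (fun t => (h t)%:E) r = (h r)%:E.

Lemma L1_eigen_term_le e (r : EAN A) : A e (r 0%N) ->
  expR (f (consE e r)) * h (consE e r) <= h r.
Proof.
move=> Aer; rewrite -lee_fin -h_eigen EFinM; apply: esum_ge.
by exists [set e]; [split; [exact: finite_set1 | move=> _ ->] | rewrite fsbig_set1].
Qed.

Hypothesis h_gt0 : forall r, 0 < h r.
Variable lb : E -> R.
Hypotheses (lb_gt0 : forall e, 0 < lb e)
  (lb_expR : forall r : EAN A, lb (r 0%N) <= expR (f r)).

Lemma prod_lb_eigen_catE_le u (r : EAN A) : sorted A (u ++ [:: r 0%N]) ->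
  (\prod_(e <- u) lb e) * h (catE u r) <= h r.
Proof.
elim: u => [|e u IH] su; first by rewrite big_nil mul1r.
have su' := path_sorted su.
have Ae : A e (catE u r 0%N).
  by rewrite catE_at // sub0n; case: u su {IH su'} => [|x u] /= /andP[].
rewrite big_cons -mulrA mulrC -mulrA; apply: le_trans (IH su').
apply: ler_wpM2l; first by apply: prodr_ge0 => i _; exact: ltW.
rewrite mulrC; apply: le_trans (L1_eigen_term_le Ae); apply: ler_wpM2r; first exact/ltW.
by have := lb_expR (consE e (catE u r)); rewrite consE_at.
Qed.

End Transfer.

Section Holder.
Variables (E : countType) (A : rel E) (R : realType) (alpha : R) (g : EAN A -> R).
Hypothesis g_holder : holder_type alpha g.

Lemma holder_type_ge0 : exists2 C : R, 0 <= C & forall n (r r' : EAN A),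
  (0 < n)%N -> pref r n = pref r' n -> `|g r - g r'| * expR (alpha * (n - 1)%:R) <= C.
Proof.
have [C HC] := g_holder; exists (Num.max C 0); first by rewrite le_max lexx orbT.
by move=> n r r' n0 rr'; rewrite le_max HC.
Qed.

Lemma holder_type_near : 0 < alpha -> forall eps, 0 < eps ->
  exists N, forall r r' : EAN A, pref r N.+1 = pref r' N.+1 -> `|g r - g r'| < eps.
Proof.
move=> a0 eps eps0; have [C C0 HC] := holder_type_ge0.
pose N := (Num.truncn (C / (eps * alpha))).+1; exists N => r r' rr'.
have := HC N.+1 r r' isT rr'; rewrite subn1 /=.
have ea0 : 0 < eps * alpha by exact: mulr_gt0.
have NC : C < eps * alpha * N%:R by rewrite mulrC -ltr_pdivrMr // truncnS_gt.
have := expR_ge1Dx (alpha * N%:R); have := expR_gt0 (alpha * N%:R).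
set ex := expR _; set d := `|_|; move=> ex0 ex1 dex.
have : d * ex < eps * ex by apply: le_lt_trans dex _; nra.
by rewrite ltr_pM2r.
Qed.

Lemma holder_type_first_letter : exists2 C : R, 0 <= C &
  forall r r' : EAN A, r 0%N = r' 0%N -> g r' - C <= g r.
Proof.
have [C C0 HC] := holder_type_ge0; exists C => // r r' rr'.
have := HC 1%N r r' isT; rewrite /pref /mkseq /= rr' subnn mulr0 expR0 mulr1.
by move=> /(_ erefl); rewrite ler_norml => /andP[+ _]; lra.
Qed.

End Holder.

Lemma expR_letter_lb (E : countType) (A : rel E) (R : realType) alpha (f : EAN A -> R) :
  holder_type alpha f -> exists lb : E -> R,
  (forall e, 0 < lb e) /\ forall r : EAN A, lb (r 0%N) <= expR (f r).
Proof.
move=> /holder_type_first_letter [C _ HC].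
exists (fun e => if pselect (exists r : EAN A, r 0%N = e) is left P
  then expR (f (projT1 (cid P)) - C) else 1).
split=> [e|r]; first by case: pselect => [?|?]; [exact: expR_gt0 | exact: ltr01].
case: pselect => [P|]; last by case; exists r.
by case: cid => r' /= r'r; rewrite ler_expR HC.
Qed.

Lemma seq_lb_gt0 (T : eqType) (R : realDomainType) (s : seq T) (F : T -> R) :
  (forall x, 0 < F x) -> exists2 d : R, 0 < d & forall x, x \in s -> d <= F x.
Proof.
move=> F0; elim: s => [|y s [d d0 Hd]]; first by exists 1.
exists (Num.min (F y) d); first by rewrite lt_min F0.
move=> x; rewrite inE => /predU1P[->|xs]; first by rewrite ge_min lexx.
by rewrite ge_min Hd ?orbT.
Qed.

Lemma eigenfunction_inf_gt0 (E : countType) (A : rel E) (R : realType) alpha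
    (f h : EAN A -> R) (r0 : EAN A) :
  0 < alpha -> finitely_irreducible A -> holder_type alpha f -> holder_type alpha h ->
  (forall r, L1 f (fun t => (h t)%:E) r = (h r)%:E) -> (forall r, 0 < h r) ->
  exists2 d : R, 0 < d & forall r, d <= h r.
Proof.
move=> a0 [L HL] f_holder h_holder h_eigen h_gt0.
have [lb [lb_gt0 lb_expR]] := expR_letter_lb f_holder.
have [N near_r0] := holder_type_near h_holder a0 (divr_gt0 (h_gt0 r0) (ltr0n _ 2)).
pose q l := \prod_(e <- pref r0 N.+1 ++ l) lb e.
have q_gt0 l : 0 < q l by apply: prodr_gt0.
have [d d0 d_le_q] := seq_lb_gt0 L q_gt0.
exists (h r0 / 2 * d) => [|r]; first by rewrite mulr_gt0 ?divr_gt0 ?h_gt0.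
have [l lL r0_l_r] := HL (r0 N) (r 0%N).
have su : sorted A ((pref r0 N.+1 ++ l) ++ [:: r 0%N]).
  by rewrite -catA /pref mkseqS cat_rcons sorted_pref_cat.
have near : pref (catE (pref r0 N.+1 ++ l) r) N.+1 = pref r0 N.+1.
  rewrite pref_catE ?size_cat ?size_mkseq ?leq_addr //.
  by rewrite -{1}(size_mkseq r0 N.+1) take_size_cat.
have := near_r0 _ _ near; rewrite ltr_distlC => /andP[_ h_near].
apply: le_trans (prod_lb_eigen_catE_le h_eigen h_gt0 lb_gt0 lb_expR su).
rewrite mulrC; apply: ler_pM; [exact: ltW | by apply: divr_ge0; [exact: ltW|] |
  exact: d_le_q | lra].
Qed.

Lemma holder_cyl_rel_osc (E : countType) (A : rel E) (R : realType) alpha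
    (g : EAN A -> R) (d : R) :
  holder_type alpha g -> 0 < d -> (forall r, d <= g r) ->
  exists2 K : R, 0 < K & forall n (w : seq E) (x t : EAN A), (0 < n)%N -> size w = n ->
    cyl w x -> cyl w t -> `|g x - g t| <= K * expR (- (n%:R * alpha)) * g t.
Proof.
move=> /holder_type_ge0 [C C0 HC] d0 d_le_g.
exists ((C + 1) * expR alpha / d); first by rewrite !mulr_gt0 ?expR_gt0 ?invr_gt0 //; lra.
move=> n w x t n0 sw wx wt; subst n.
have := HC _ x t n0 (etrans wx (esym wt)).
set e := expR (- _); set D := `|_|; move=> HD.
have exp_inv : expR (alpha * (size w - 1)%:R) * (expR alpha * e) = 1.
  by rewrite /e -!expRD natrB // -[RHS]expR0; congr expR; ring.
have ae0 : 0 < expR alpha * e by rewrite mulr_gt0 ?expR_gt0.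
have D_le : D <= C * (expR alpha * e).
  by rewrite -[D]mulr1 -exp_inv (mulrA D); apply: ler_wpM2r => //; exact: ltW.
have ge1 : 1 <= g t / d by rewrite ler_pdivlMr // mul1r.
apply: le_trans D_le _.
have -> : (C + 1) * expR alpha / d * e * g t = (C + 1) * (expR alpha * e) * (g t / d) by ring.
set X := expR alpha * e in ae0 *; set Y := g t / d in ge1 *.
have : 0 <= (C + 1) * X by rewrite mulr_ge0 //; lra.
nra.
Qed.

(* No measurability is needed: the integral of a nonnegative function is a
   supremum over the simple functions below it. *)
Lemma ge0_le_integral_nonmeas d (T : measurableType d) (R : realType)
    (mu : {measure set T -> \bar R}) (D : set T) (g1 g2 : T -> \bar R) :
  (forall x, D x -> 0 <= g1 x)%E -> (forall x, D x -> g1 x <= g2 x)%E ->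
  (\int[mu]_(x in D) g1 x <= \int[mu]_(x in D) g2 x)%E.
Proof.
move=> g10 g12; have g20 x (Dx : D x) := le_trans (g10 x Dx) (g12 x Dx).
rewrite !ge0_integralE //; apply: ereal_sup_le => _ [s s_le <-]; exists s => //= x.
by apply: le_trans (s_le x) _; rewrite /patch; case: ifP => // /set_mem /g12.
Qed.

Lemma ge0_integral_set_bounds d (T : measurableType d) (R : realType)
    (mu : {measure set T -> \bar R}) (D : set T) (g : T -> R) (a b : R) :
  measurable D -> (forall x, D x -> 0 <= g x) -> (forall x, D x -> a <= g x <= b) ->
  (a%:E * mu D <= \int[mu]_(x in D) (g x)%:E)%E /\
  (\int[mu]_(x in D) (g x)%:E <= b%:E * mu D)%E.
Proof.
move=> mD g0 gab; split.
- have [a0|a0] := leP a 0.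
    apply: (@le_trans _ _ 0%E); first by rewrite mule_le0_ge0 ?lee_fin.
    by apply: integral_ge0 => x Dx; rewrite lee_fin g0.
  rewrite -(integral_cst mu mD); apply: ge0_le_integral_nonmeas => x Dx /=.
    exact/ltW.
  by rewrite lee_fin; case/andP: (gab x Dx).
- rewrite -(integral_cst mu mD); apply: ge0_le_integral_nonmeas => x Dx /=.
    by rewrite lee_fin g0.
  by rewrite lee_fin; case/andP: (gab x Dx).
Qed.

Unset Implicit Arguments.
Theorem mainTheorem14 (R : realType) (E : countType) (A : rel E)
  (alpha : R) (r0 : EAN A)
  (f : EAN A -> R) (m : probability (EANm E A r0) R) (h : EAN A -> R) :
  0 < alpha ->
  finitely_irreducible A ->
  pot_summable f -> strongly_regular f -> holder_type alpha f ->
  top_pressure f = 0%E ->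
  (* m : Borel probability with L_1^* m = m *)
  (forall B : set (EANm E A r0), measurable B ->
     (\int[m]_x L1 f (fun t => (\1_B t)%:E) x = m B)%E) ->
  (* h : positive Hölder continuous, L_1 h = h, int h dm = 1 *)
  (forall r, 0 < h r) -> holder_type alpha h ->
  (forall r, L1 f (fun t => (h t)%:E) r = (h r)%:E) ->
  (\int[m]_x (h x)%:E = 1)%E ->
  exists K1 : R, 0 < K1 /\
    forall (n : nat) (w : seq E), (0 < n)%N -> words A n w ->
    forall t : EAN A, cyl w t ->
      (((1 - K1 * expR (- (n%:R * alpha))) * h t)%:E * m (cyl w)
         <= \int[m]_(x in cyl w) (h x)%:E)%E /\
      (\int[m]_(x in cyl w) (h x)%:E
         <= ((1 + K1 * expR (- (n%:R * alpha))) * h t)%:E * m (cyl w))%E.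
Proof.
move=> a0 irr _ _ f_holder _ _ h_gt0 h_holder h_eigen _.
have [d d0 d_le_h] := eigenfunction_inf_gt0 r0 a0 irr f_holder h_holder h_eigen h_gt0.
have [K K0 osc] := holder_cyl_rel_osc h_holder d0 d_le_h.
exists K; split=> // n w n0 [sw _] t wt.
have mw : measurable (cyl w : set (EANm E A r0)) by apply: sub_sigma_algebra; exists w.
apply: ge0_integral_set_bounds => // [x _|x wx]; first exact: ltW.
by have := osc n w x t n0 sw wx wt; rewrite ler_norml => /andP[]; lra.
Qed.
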